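(* For every integer $k\ge 1$, $E_k\subseteq E_{k+1}$. That is, if a number can be condensed from every multiset of $k$ decimal digits, then it can be condensed from every multiset of $k+1$ decimal digits.
   Context: Multisets are collections of numbers in which elements may repeat; $A+B$ denotes the multiset union (multiplicities add), and $[S]$ is the set of distinct elements of $S$. For a finite nonempty multiset $S$ of real numbers, $V(S)$ (''the values condensable from $S$'') is the smallest set of real numbers such that: (1) if $|S|=1$ then $S\subseteq V(S)$; (2) if $|S|\ge 2$, then for all nonempty multisets $A,B$ with $A+B=S$ and all $a\in V(A)$, $b\in V(B)$, each of $a+b,\ a-b,\ b-a,\ ab,\ a/b,\ b/a,\ a^b,\ b^a$ lies in $V(S)$ whenever it is a well-defined real number (no division by zero); (3) if $a\in V(S)$ is a nonnegative integer then $a!\in V(S)$ (so in particular $0!=1$). Let $D=\{0,1,\dots,9\}$. For $k\ge1$, $E_k=\bigcap\{V(S): S \text{ a multiset with } |S|=k,\ [S]\subseteq D\}$. *)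

From Stdlib Require Import Reals Lra Lia ZArith Arith List Permutation.
Import ListNotations.
Open Scope R_scope.

(* Real exponentiation a^b, as a relation "a^b is a well-defined real number c". *)
Inductive rpow_rel : R -> R -> R -> Prop :=
| rpow_pos : forall a b, 0 < a -> rpow_rel a b (Rpower a b)
| rpow_zero : forall b, 0 < b -> rpow_rel 0 b 0
| rpow_negint : forall a (z : Z), a < 0 -> rpow_rel a (IZR z) (powerRZ a z)
| rpow_negroot : forall a (p q : Z), a < 0 -> (1 < q)%Z -> Z.odd q = true ->
    Z.gcd p q = 1%Z ->
    rpow_rel a (IZR p / IZR q)
      (if Z.odd p then - Rpower (- a) (IZR p / IZR q) else Rpower (- a) (IZR p / IZR q)).

Inductive combine : R -> R -> R -> Prop :=
| comb_add : forall a b, combine a b (a + b)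
| comb_sub : forall a b, combine a b (a - b)
| comb_rsub : forall a b, combine a b (b - a)
| comb_mul : forall a b, combine a b (a * b)
| comb_div : forall a b, b <> 0 -> combine a b (a / b)
| comb_rdiv : forall a b, a <> 0 -> combine a b (b / a)
| comb_pow : forall a b c, rpow_rel a b c -> combine a b c
| comb_rpow : forall a b c, rpow_rel b a c -> combine a b c.

(* Multisets are represented by lists up to permutation.
   V S x : "x is condensable from S". *)
Inductive V : list R -> R -> Prop :=
| V_single : forall x, V [x] x
| V_split : forall S A B a b c,
    Permutation S (A ++ B) -> A <> [] -> B <> [] ->
    V A a -> V B b -> combine a b c -> V S c
| V_fact : forall S (n : nat), V S (INR n) -> V S (INR (fact n)).

Definition E (k : nat) (x : R) : Prop :=
  forall S : list nat, length S = k -> (forall d, In d S -> (d <= 9)%nat) ->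
    V (map INR S) x.

(* Replace two digits a, b of a (k+1)-digit multiset by the digit |a - b|:
   x is condensable from the resulting k digits, and since |a - b| is
   condensable from {a, b}, substituting {a, b} for the leaf |a - b| turns
   that condensation into one from the original k + 1 digits. *)
From Stdlib Require Import Reals List.
From Stdlib Require Import Lia Permutation Arith.
Import ListNotations.
Open Scope R_scope.

Lemma V_subst_perm (L : list R) (x : R) :
  V L x -> forall (c : R) (T M : list R),
  Permutation L (c :: T) -> M <> [] -> V M c -> V (M ++ T) x.
Proof.
  induction 1 as [y | S A B a b r HP HA HB VA IHA VB IHB Hc | S n VS IH];
    intros c T M Hp HM Vc.
  - apply Permutation_length_1_inv in Hp as [= -> ->].
    rewrite app_nil_r; exact Vc.
  - assert (HcAB : In c (A ++ B)).
    { apply (Permutation_in c HP), (Permutation_in c (Permutation_sym Hp)).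
      now left. }
    assert (HT : Permutation (c :: T) (A ++ B)) by now rewrite Hp in HP.
    apply in_app_or in HcAB as [HcA | HcB].
    + apply in_split in HcA as [A1 [A2 ->]].
      rewrite <- app_assoc in HT; simpl in HT.
      apply Permutation_cons_app_inv in HT.
      apply (V_split _ (M ++ A1 ++ A2) B a b r); trivial.
      * rewrite <- !app_assoc; now apply Permutation_app_head.
      * intros [HMnil _]%app_eq_nil; contradiction.
      * apply (IHA c); trivial.
        apply Permutation_sym, Permutation_middle.
    + apply in_split in HcB as [B1 [B2 ->]].
      rewrite app_assoc in HT.
      apply Permutation_cons_app_inv in HT; rewrite <- app_assoc in HT.
      apply (V_split _ A (M ++ B1 ++ B2) a b r); trivial.
      * rewrite HT; apply Permutation_app_swap_app.
      * intros [HMnil _]%app_eq_nil; contradiction.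
      * apply (IHB c); trivial.
        apply Permutation_sym, Permutation_middle.
  - apply V_fact; eauto.
Qed.

Lemma V_subst (c x : R) (T M : list R) :
  V (c :: T) x -> M <> [] -> V M c -> V (M ++ T) x.
Proof. intros Vx; exact (V_subst_perm _ _ Vx c T M (Permutation_refl _)). Qed.

(* With truncated subtraction, [a - b + (b - a)] is |a - b|. *)
Lemma V_pair_dist (a b : nat) : V [INR a; INR b] (INR (a - b + (b - a))).
Proof.
  apply (V_split _ [INR a] [INR b] (INR a) (INR b)); try easy; try apply V_single.
  destruct (Nat.le_ge_cases b a).
  - replace (a - b + (b - a))%nat with (a - b)%nat by lia.
    rewrite minus_INR by lia; apply comb_sub.
  - replace (a - b + (b - a))%nat with (b - a)%nat by lia.
    rewrite minus_INR by lia; apply comb_rsub.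
Qed.

Theorem lemma4p1 : forall (k : nat) (x : R), (1 <= k)%nat -> E k x -> E (S k) x.
Proof.
  intros k x Hk HE L Hlen Hdigits.
  destruct L as [|a [|b rest]]; simpl in Hlen; try lia.
  set (d := (a - b + (b - a))%nat).
  assert (Hd : V (map INR (d :: rest)) x).
  { apply HE; [simpl; lia |].
    intros e [<- | He]; [| apply Hdigits; simpl; auto].
    assert (Ha : (a <= 9)%nat) by (apply Hdigits; simpl; auto).
    assert (Hb : (b <= 9)%nat) by (apply Hdigits; simpl; auto).
    unfold d; lia. }
  exact (V_subst _ _ _ [INR a; INR b] Hd ltac:(discriminate) (V_pair_dist a b)).
Qed.
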